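(* Let $S$ be a simple $(l,r)$-framed algebra, $\alpha\in C_S$, $(d^1,c^1),(d^2,c^2)\in I_S$, $a\in S_{(0,\alpha)}$, $v_1\in S_{(d^1,c^1)}$, $v_2\in S_{(d^2,c^2)}$. Then for every $\gamma\in\mathbb{Z}_2^{d^1d^2}$, $a\cdot\big(v_1\cdot_{(d^1+d^2,(d^1+d^2)_\perp(c^1+c^2)+\gamma)}v_2\big)=(-1)^{\frac12|d^1\alpha|}(-1)^{|\alpha c^1|+|d^1d^2\alpha|+|\gamma\alpha|+|d^1\alpha c^2|}\,v_1\cdot_{(d^1+d^2,(d^1+d^2)_\perp(c^1+c^2+\alpha)+\gamma)}(a\cdot v_2)$, and $a\cdot(v_1\cdot v_2)=(-1)^{|d^1_\perp\alpha|+|d^1\alpha c^2|}(a\cdot v_1)\cdot v_2$.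
   Context: Let $\mathrm{IS}=\{0,\frac12,\frac1{16}\}$ with fusion rule $\star$ (values are subsets): $0\star h=h\star0=\{h\}$, $\frac12\star\frac12=\{0\}$, $\frac12\star\frac1{16}=\frac1{16}\star\frac12=\{\frac1{16}\}$, $\frac1{16}\star\frac1{16}=\{0,\frac12\}$; $A(h_0,h_1,h_2,h_3)=\{h: h\in h_2\star h_3,\ h_0\in h_1\star h\}$. For $h\in A(h_0,h_1,h_2,h_3)$, $h'\in A(h_0,h_2,h_1,h_3)$ define $B^{h,h'}_{h_0,h_1,h_2,h_3}$: $B_{*,0,*,*}=B_{*,*,0,*}=1$; $B_{*,\frac12,\frac12,*}=-1$; $B_{a,\frac12,\frac1{16},a'}=B_{a,\frac1{16},\frac12,a'}=i$ if $a$ or $a'$ is $\frac12$, else $-i$; $B^{b,b'}_{a,\frac1{16},\frac1{16},a'}=e^{-\pi i/8}\cdot\{1$ if $a,a'\ne\frac1{16},a=a'$; $i$ if $a,a'\neq\frac1{16},a\ne a'$; $\frac{1+i}2$ if $a=a'=\frac1{16},b=b'$; $\frac{1-i}2$ if $a=a'=\frac1{16},b\neq b'\}$. $\mathrm{IS}^{(l,r)}=\mathrm{IS}^l\times\mathrm{IS}^r$, $\lambda=(h_1,..,h_l,\bar h_1,..,\bar h_r)$, $s(\lambda)=\sum h_i-\sum\bar h_j$; $\star$, $A$ componentwise; $B^{\lambda,\lambda'}_{\lambda^0,\dots,\lambda^3}=\prod_{i\le l}B^{h_i,h'_i}_{h^0_i,\dots,h^3_i}\prod_{j\le r}\overline{B^{\bar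 h_j,\bar h'_j}_{\bar h^0_j,\dots,\bar h^3_j}}$. An $(l,r)$-framed algebra: finite-dimensional $\mathrm{IS}^{(l,r)}$-graded $S=\bigoplus S_\lambda$ over $\mathbb{C}$ with bilinear product, nonzero $1\in S_0$, $a\cdot_\lambda b$ the $S_\lambda$-component of $a\cdot b$, satisfying (FA1) $S_\lambda=0$ unless $s(\lambda)\in\mathbb{Z}$; (FA2) $S_0=\mathbb{C}1$, $1$ a two-sided unit; (FA3) $S_{\lambda^1}\cdot S_{\lambda^2}\subset\bigoplus_{\lambda\in\lambda^1\star\lambda^2}S_\lambda$; (FA4) $a_2\cdot_{\lambda^0}(a_1\cdot_{\lambda'}a_3)=\sum_{\lambda\in A(\lambda^0,\lambda^1,\lambda^2,\lambda^3)}B^{\lambda,\lambda'}_{\lambda^0,\lambda^1,\lambda^2,\lambda^3}a_1\cdot_{\lambda^0}(a_2\cdot_\lambda a_3)$ for $a_i\in S_{\lambda^i}$, $\lambda'\in A(\lambda^0,\lambda^2,\lambda^1,\lambda^3)$. Ideal: graded subspace $M$ with $S\cdot M\subset M$; simple: only ideals $0$ and $S$. Identify $\mathrm{IS}$ with $\{(d,c)\in\mathbb{Z}_2^2:dc=0\}$ via $0\leftrightarrow(0,0)$, $\frac12\leftrightarrow(0,1)$, $\frac1{16}\leftrightarrow(1,0)$, and componentwise $\mathrm{IS}^{(l,r)}$ with pairs $(d,c)\in(\mathbb{Z}_2^{l+r})^2$, $dc=0$ (componentwise product); $S_{(d,c)}$ is the graded piece. For $c\in\mathbb{Z}_2^{l+r}$,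 $|c|=|c|_l-|c|_r$ with $|c|_l,|c|_r$ the numbers of ones in the first $l$, last $r$ coordinates; $d_\perp=1^{l+r}+d$; $\mathbb{Z}_2^d=\{\gamma:d\gamma=\gamma\}$. $C_S=\{\alpha:S_{(0,\alpha)}\neq0\}$, $I_S=\{(d,c):S_{(d,c)}\ne0\}$. *)

From Stdlib Require Import Reals.
From HB Require Import structures.
From mathcomp Require Import all_boot all_algebra all_field.
From mathcomp Require Import complex.
From mathcomp Require Import Rstruct.
Set Implicit Arguments. Unset Strict Implicit. Unset Printing Implicit Defensive.
Import GRing.Theory Num.Theory.
Local Open Scope ring_scope.

Definition CC : fieldType := complex R.
Definition Ci : CC := Complex 0 1.
Definition e_m_pi_i_8 : CC := Complex (cos (PI / 8)%R) (- sin (PI / 8)%R).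

Inductive IS := h0 | h12 | h116.

Definition IS_code (h : IS) : 'I_3 :=
  match h with h0 => inord 0 | h12 => inord 1 | h116 => inord 2 end.
Definition IS_decode (i : 'I_3) : IS :=
  match val i with 0 => h0 | 1 => h12 | _ => h116 end.
Lemma IS_codeK : cancel IS_code IS_decode.
Proof. by case; rewrite /IS_decode /= inordK. Qed.
HB.instance Definition _ := Countable.copy IS (can_type IS_codeK).
HB.instance Definition _ := Finite.copy IS (can_type IS_codeK).

Definition IS_val (h : IS) : rat :=
  match h with h0 => 0 | h12 => 1 / 2 | h116 => 1 / 16 end.

(* fusion rule: fus h1 h2 h <-> h \in h1 * h2 *)
Definition fus (a b h : IS) : bool :=
  match a, b with
  | h0, _ => h == b
  | _, h0 => h == a
  | h12, h12 => h == h0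
  | h12, h116 | h116, h12 => h == h116
  | h116, h116 => (h == h0) || (h == h12)
  end.

Definition inA1 (x0 x1 x2 x3 h : IS) : bool := fus x2 x3 h && fus x1 h x0.

Definition B1 (h h' a h1 h2 a' : IS) : CC :=
  match h1, h2 with
  | h0, _ | _, h0 => 1
  | h12, h12 => -1
  | h12, h116 | h116, h12 =>
      if (a == h12) || (a' == h12) then Ci else - Ci
  | h116, h116 =>
      e_m_pi_i_8 *
      (if (a != h116) && (a' != h116) then
         (if a == a' then 1 else Ci)
       else if (a == h116) && (a' == h116) then
         (if h == h' then (1 + Ci) / 2%:R else (1 - Ci) / 2%:R)
       else 0 (* impossible case: not in A *))
  end.

(* Gradings: lambda in IS^{(l,r)} = functions on 'I_(l+r);
   coordinates i < l are the "left" ones, i >= l the "right" ones. *)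
Definition grade (l r : nat) := {ffun 'I_(l + r) -> IS}.

Definition grade0 l r : grade l r := [ffun => h0].

Definition s_val l r (la : grade l r) : rat :=
  \sum_(i < l + r | (i < l)%N) IS_val (la i)
  - \sum_(i < l + r | (l <= i)%N) IS_val (la i).

Definition star l r (la1 la2 la : grade l r) : bool :=
  [forall i, fus (la1 i) (la2 i) (la i)].

Definition Aset l r (la0 la1 la2 la3 : grade l r) : {set grade l r} :=
  [set la : grade l r | [forall i, inA1 (la0 i) (la1 i) (la2 i) (la3 i) (la i)]].

Definition Bmul l r (la la' la0 la1 la2 la3 : grade l r) : CC :=
  (\prod_(i < l + r | (i < l)%N) B1 (la i) (la' i) (la0 i) (la1 i) (la2 i) (la3 i))
  * (\prod_(i < l + r | (l <= i)%N)
       conjc (B1 (la i) (la' i) (la0 i) (la1 i) (la2 i) (la3 i))).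

(* A graded finite-dimensional algebra over C is encoded by
   - a finite-dimensional C-vector space V (vectType),
   - projections pr la : 'End(V) giving the direct sum decomposition
     V = (+)_la S_la with S_la = image of pr la,
   - a bilinear product mul and a unit one. *)
Section Framed.
Variables (l r : nat) (V : vectType CC) (pr : grade l r -> 'End(V))
          (mul : V -> V -> V) (one : V).

Definition homog (la : grade l r) (v : V) : Prop := pr la v = v.

Definition mulcomp (la : grade l r) (a b : V) : V := pr la (mul a b).

Definition is_graded_decomp : Prop :=
  [/\ forall la v, pr la (pr la v) = pr la v,
      forall la mu v, la != mu -> pr la (pr mu v) = 0
    & forall v, \sum_la pr la v = v].

Definition is_bilinear : Prop :=
  (forall b, linear (fun a => mul a b)) /\ (forall a, linear (mul a)).

Definition is_framed_algebra : Prop :=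
  [/\ is_graded_decomp /\ is_bilinear,
   forall la, ~~ (s_val la \is a Num.int) -> forall v, pr la v = 0,
   [/\ one != 0, homog (grade0 l r) one,
       (forall v, homog (grade0 l r) v -> exists k : CC, v = k *: one)
     & forall v, mul one v = v /\ mul v one = v],
   forall la1 la2 a b, homog la1 a -> homog la2 b ->
     forall la, ~~ star la1 la2 la -> mulcomp la a b = 0
  &
   forall la0 la1 la2 la3 a1 a2 a3,
     homog la1 a1 -> homog la2 a2 -> homog la3 a3 ->
     forall la', la' \in Aset la0 la2 la1 la3 ->
       mulcomp la0 a2 (mulcomp la' a1 a3)
       = \sum_(la in Aset la0 la1 la2 la3)
           Bmul la la' la0 la1 la2 la3 *: mulcomp la0 a1 (mulcomp la a2 a3)].

Definition is_ideal (M : {vspace V}) : Prop :=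
  (forall la m, m \in M -> pr la m \in M) /\
  (forall s m, m \in M -> mul s m \in M).

Definition is_simple : Prop :=
  forall M : {vspace V}, is_ideal M -> M = 0%VS \/ M = fullv.

End Framed.

Definition bits (l r : nat) := {ffun 'I_(l + r) -> bool}.

Definition bxor l r (x y : bits l r) : bits l r := [ffun i => x i (+) y i].
Definition band l r (x y : bits l r) : bits l r := [ffun i => x i && y i].
Definition bperp l r (x : bits l r) : bits l r := [ffun i => ~~ x i].
Definition bzero l r : bits l r := [ffun => false].

Definition grade_of l r (d c : bits l r) : grade l r :=
  [ffun i => if d i then h116 else if c i then h12 else h0].

Definition bnorm l r (c : bits l r) : int :=
  (#|[set i : 'I_(l + r) | c i && (i < l)%N]|%:Z
   - #|[set i : 'I_(l + r) | c i && (l <= i)%N]|%:Z)%R.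

Definition in_Z2d l r (d g : bits l r) : bool := band d g == g.

Definition msign (k : int) : CC := (-1) ^ k.
(* (-1)^{k/2} (k is even in the intended use) *)
Definition msign_half (k : int) : CC := (-1) ^ (k %/ 2)%Z.

Definition in_CS l r (V : vectType CC) (pr : grade l r -> 'End(V)) (al : bits l r) :=
  exists v, v != 0 /\ homog pr (grade_of (bzero l r) al) v.
Definition in_IS l r (V : vectType CC) (pr : grade l r -> 'End(V)) (d c : bits l r) :=
  band d c = bzero l r /\ exists v, v != 0 /\ homog pr (grade_of d c) v.

From Pilot Require Import Defs.
From Stdlib Require Import Reals.
From HB Require Import structures.
From mathcomp Require Import all_boot all_algebra all_field.
From mathcomp Require Import complex.
From mathcomp Require Import Rstruct.
From mathcomp Require Import ring lra zify.
Import GRing.Theory Num.Theory.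
Set Implicit Arguments. Unset Strict Implicit. Unset Printing Implicit Defensive.
Local Open Scope ring_scope.

(** A nonzero [a] of weight [(0,α)] is a simple current: fusion with [(0,α)]
    is the bijection [shift al] of weights, so [a x] is homogeneous whenever
    [x] is, and every instance of (FA4) with [a] among the factors has a single
    term.  The first identity is one such instance; the second combines one
    with two instances of commutativity, i.e. (FA4) with third factor [1].
    Simplicity is used only to get [a a <> 0] (otherwise the left annihilator
    of [a] is an ideal containing [a] but not [1]); commuting [a] past itself,
    and twice past a nonzero [x] of weight [(d,c)], then shows that [|α|] and
    [|dα|] are even.  With these parities the products of [B]-values, computed
    coordinate by coordinate, become the stated signs. *)

Lemma linear_morph (R : pzRingType) (U W : lmodType R) (f : U -> W) : linear f ->
  [/\ f 0 = 0, {morph f : u v / u + v} & forall k, {morph f : u / k *: u}].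
Proof.
move=> lf; pose F : {linear U -> W} := HB.pack f (GRing.isLinear.Build _ _ _ _ f lf).
by split; [exact: (linear0 F) | exact: (linearD F) | exact: (linearZZ F)].
Qed.

Lemma joint_kernel (K : fieldType) (W : vectType K) (I : finType)
  (F : I -> W -> W) :
  (forall i, linear (F i)) ->
  exists N : {vspace W}, forall v, (v \in N) = [forall i, F i v == 0].
Proof.
move=> lF.
pose fL i : {linear W -> W} :=
  HB.pack (F i) (GRing.isLinear.Build _ _ _ _ (F i) (lF i)).
exists (\bigcap_i lker (linfun (fL i)))%VS => v.
rewrite memvE; apply/subv_bigcapP/forallP => [vN i | vN i _].
  by have := vN i isT; rewrite -memvE memv_ker lfunE.
by rewrite -memvE memv_ker lfunE; apply: vN.
Qed.

Lemma scale_fixed (K : fieldType) (W : lmodType K) (k : K) (x : W) :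
  x != 0 -> k *: x = x -> k = 1.
Proof.
move=> /negbTE xnz /eqP; rewrite -subr_eq0 -{2}[x]scale1r -scalerBl scaler_eq0.
by rewrite xnz orbF subr_eq0 => /eqP.
Qed.

Local Ltac complex_ring :=
  rewrite /e_m_pi_i_8 /Ci; apply/eqP; rewrite eq_complex /=;
  apply/andP; split; apply/eqP; ring.

(* [==] on [IS] does not reduce by [simpl]; [IS_eqb] does. *)
Definition IS_eqb (x y : IS) : bool :=
  match x, y with h0, h0 | h12, h12 | h116, h116 => true | _, _ => false end.

Lemma eqISE x y : (x == y) = IS_eqb x y.
Proof. by case: x; case: y => //=; apply/eqP. Qed.

Section Grades.
Variables l r : nat.
Implicit Types (G la : grade l r) (d c : bits l r).

Lemma in_Aset la la0 la1 la2 la3 :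
  (la \in Aset la0 la1 la2 la3) = star la2 la3 la && star la1 la la0.
Proof.
rewrite inE; apply/forallP/andP => [H|[/forallP H2 /forallP H1] i].
  by split; apply/forallP => i; case/andP: (H i).
by rewrite /inA1 H1 H2.
Qed.

Lemma star_sym G1 G2 la : star G1 G2 la = star G2 G1 la.
Proof.
by apply: eq_forallb => i; case: (G1 i); case: (G2 i); case: (la i); rewrite /= ?eqISE.
Qed.

Lemma star_graph G1 G2 (F : grade l r) la :
  (forall i h, fus (G1 i) (G2 i) h = (h == F i)) -> star G1 G2 la = (la == F).
Proof.
move=> E; apply/forallP/eqP => [H|-> i]; last by rewrite E.
by apply/ffunP => i; apply/eqP; rewrite -E.
Qed.

Lemma star0r G la : star G (grade0 l r) la = (la == G).
Proof. by apply: star_graph => i h; rewrite ffunE; case: (G i); case: h. Qed.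

Lemma Aset_grade0 G1 G2 la0 : star G2 G1 la0 ->
  Aset la0 G1 G2 (grade0 l r) = [set G2].
Proof.
move=> st; apply/setP => la; rewrite in_Aset star0r inE.
by case: eqP => [->|] //=; rewrite star_sym.
Qed.

Definition swap12 (h : IS) : IS :=
  match h with h0 => h12 | h12 => h0 | h116 => h116 end.

Definition shift (al : bits l r) G : grade l r :=
  [ffun i => if al i then swap12 (G i) else G i].

Variable al : bits l r.
Local Notation gA := (grade_of (bzero l r) al).

Lemma shiftK : involutive (shift al).
Proof. by move=> G; apply/ffunP => i; rewrite !ffunE; case: (al i); case: (G i). Qed.

Lemma shift_cur : shift al gA = grade0 l r.
Proof. by apply/ffunP => i; rewrite !ffunE; case: (al i). Qed.

Lemma star_cur_l G la : star gA G la = (la == shift al G).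
Proof.
apply: star_graph => i h; rewrite !ffunE.
by case: (al i); case: (G i); case: h; rewrite /= ?eqISE.
Qed.

Lemma star_cur_r G la : star G gA la = (la == shift al G).
Proof. by rewrite star_sym star_cur_l. Qed.

Lemma star_shiftl G1 G2 la : star (shift al G1) G2 (shift al la) = star G1 G2 la.
Proof.
apply: eq_forallb => i; rewrite !ffunE.
by case: (al i); case: (G1 i); case: (G2 i); case: (la i); rewrite /= ?eqISE.
Qed.

Lemma Aset_cur2 la0 G1 G2 : star G1 (shift al G2) la0 ->
  Aset la0 G1 gA G2 = [set shift al G2].
Proof.
by move=> st; apply/setP => la; rewrite in_Aset star_cur_l inE; case: eqP => [->|].
Qed.

Lemma Aset_cur1 la0 G1 G2 : star G1 G2 (shift al la0) ->
  Aset la0 gA G1 G2 = [set shift al la0].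
Proof.
move=> st; apply/setP => la; rewrite in_Aset star_cur_l inE eq_sym.
by rewrite (can2_eq shiftK shiftK); case: eqP => [->|]; rewrite ?st ?andbF.
Qed.

End Grades.

Lemma msignD x y : msign (x + y) = msign x * msign y.
Proof. by rewrite /msign exprzDr ?unitrN1. Qed.

Lemma opp1_neq1 : (-1 : CC) != 1.
Proof. by rewrite eq_complex /=; apply/nandP; left; apply/eqP; lra. Qed.

Lemma msign_half_even (k : int) : msign k = 1 -> msign_half k = (- Ci) ^ k.
Proof.
have sq m (x : CC) : x ^ (m * 2) = (x ^+ 2) ^ m by rewrite mulrC -exprz_exp.
have Ci2 : (- Ci) ^+ 2 = -1 by rewrite sqrrN expr2; complex_ring.
rewrite /msign /msign_half {1 3}(divz_eq k 2).
have [->|->] : (k %% 2)%Z = 0 \/ (k %% 2)%Z = 1 by lia.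
  by rewrite !addr0 !sq Ci2.
rewrite exprzDr ?unitrN1 // sq sqrrN expr1n exp1rz expr1z mul1r.
by move/eqP; rewrite (negbTE opp1_neq1).
Qed.

Section Signs.
Variables l r : nat.

Definition lrprod (f : 'I_(l + r) -> CC) : CC :=
  (\prod_(i < l + r | (i < l)%N) f i) * \prod_(i < l + r | (l <= i)%N) conjc (f i).

Lemma BmulE (la la' la0 la1 la2 la3 : grade l r) :
  Bmul la la' la0 la1 la2 la3
  = lrprod (fun i => Defs.B1 (la i) (la' i) (la0 i) (la1 i) (la2 i) (la3 i)).
Proof. by []. Qed.

Lemma lrprodM f g : lrprod f * lrprod g = lrprod (fun i => f i * g i).
Proof.
rewrite /lrprod mulrACA -!big_split /=; congr (_ * _).
by apply: eq_bigr => i _; rewrite rmorphM.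
Qed.

Lemma eq_lrprod f g : f =1 g -> lrprod f = lrprod g.
Proof.
by move=> fg; rewrite /lrprod; congr (_ * _); apply: eq_bigr => i _; rewrite fg.
Qed.

Lemma prod_if_card (P c : pred 'I_(l + r)) (x : CC) :
  \prod_(i | P i) (if c i then x else 1) = x ^+ #|[set i | c i && P i]|.
Proof.
rewrite -big_mkcondr prodr_const; congr (_ ^+ _).
by apply: eq_card => i; rewrite !inE andbC.
Qed.

Lemma lrprod_if_unitary (c : bits l r) (x : CC) : x * conjc x = 1 ->
  lrprod (fun i => if c i then x else 1) = x ^ bnorm c.
Proof.
move=> xx'; have xU : x \is a GRing.unit by apply/unitrPr; exists (conjc x).
have x'E : conjc x = x^-1 by rewrite -[LHS]mul1r -(mulVr xU) -mulrA xx' mulr1.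
rewrite /lrprod prod_if_card.
under eq_bigr => i _ do rewrite (fun_if conjc) rmorph1 x'E.
by rewrite prod_if_card exprVn exprnN exprnP -exprzDr.
Qed.

Lemma msign_bnorm (c : bits l r) :
  msign (bnorm c) = lrprod (fun i => if c i then -1 else 1).
Proof. by rewrite lrprod_if_unitary // rmorphN1 mulrNN mulr1. Qed.

Lemma msign_half_bnorm (c : bits l r) : msign (bnorm c) = 1 ->
  msign_half (bnorm c) = lrprod (fun i => if c i then - Ci else 1).
Proof. by move/msign_half_even ->; rewrite lrprod_if_unitary //; complex_ring. Qed.

End Signs.

Lemma band_eq0P l r (d c : bits l r) :
  band d c = bzero l r -> forall i, d i && c i = false.
Proof. by move/ffunP => dc i; move: (dc i); rewrite !ffunE. Qed.

Lemma in_Z2dP l r (d g : bits l r) : in_Z2d d g -> forall i, g i ==> d i.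
Proof.
by move/eqP/ffunP => dg i; move: (dg i); rewrite !ffunE; case: (g i); case: (d i).
Qed.

Section Coefficients.
Variables (l r : nat) (al : bits l r).
Local Notation gA := (grade_of (bzero l r) al).

Lemma Bmul_cur_self :
  Bmul gA gA (grade0 l r) gA gA (grade0 l r) = msign (bnorm al).
Proof. by rewrite msign_bnorm; apply: eq_lrprod => i; rewrite !ffunE; case: (al i). Qed.

Lemma Bmul_cur_braid d c : band d c = bzero l r ->
  Bmul (grade_of d c) gA (shift al (grade_of d c)) gA (grade_of d c) (grade0 l r)
  * Bmul gA (grade_of d c) (shift al (grade_of d c)) (grade_of d c) gA (grade0 l r)
  = msign (bnorm (band d al)).
Proof.
move/band_eq0P => dc; rewrite msign_bnorm !BmulE lrprodM; apply: eq_lrprod => i.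
rewrite !ffunE; move: (dc i).
by case: (al i); case: (d i); case: (c i); rewrite /= ?eqISE //= => _; complex_ring.
Qed.

Variables d1 c1 d2 c2 : bits l r.
Hypotheses (hdc1 : band d1 c1 = bzero l r) (hdc2 : band d2 c2 = bzero l r).
Local Notation g1 := (grade_of d1 c1).
Local Notation g2 := (grade_of d2 c2).

Section ProductGrade.
Variable g : bits l r.
Hypothesis hg : in_Z2d (band d1 d2) g.
Local Notation d := (bxor d1 d2).
Local Notation gP := (grade_of d (bxor (band (bperp d) (bxor c1 c2)) g)).
Local Notation gR := (grade_of d (bxor (band (bperp d) (bxor (bxor c1 c2) al)) g)).

Lemma star_prod_grade : star g1 g2 gP.
Proof.
apply/forallP => i; move: (band_eq0P hdc1 i) (band_eq0P hdc2 i) (in_Z2dP hg i).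
rewrite !ffunE.
by case: (d1 i); case: (c1 i); case: (d2 i); case: (c2 i); case: (g i);
  rewrite /= ?eqISE.
Qed.

Lemma shift_prod_grade : shift al gP = gR.
Proof.
apply/ffunP => i; move: (band_eq0P hdc1 i) (band_eq0P hdc2 i) (in_Z2dP hg i).
rewrite !ffunE.
by case: (al i); case: (d1 i); case: (c1 i); case: (d2 i); case: (c2 i); case: (g i).
Qed.

Lemma Bmul_cur_prod : msign (bnorm (band d1 al)) = 1 ->
  Bmul (shift al g2) gP gR g1 gA g2
  = msign_half (bnorm (band d1 al))
    * msign (bnorm (band al c1) + bnorm (band (band d1 d2) al)
             + bnorm (band g al) + bnorm (band (band d1 al) c2)).
Proof.
move=> e1; rewrite (msign_half_bnorm e1) 3!msignD !msign_bnorm BmulE !lrprodM.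
apply: eq_lrprod => i; move: (band_eq0P hdc1 i) (band_eq0P hdc2 i) (in_Z2dP hg i).
rewrite !ffunE.
by case: (al i); case: (d1 i); case: (c1 i); case: (d2 i); case: (c2 i); case: (g i);
  rewrite /= ?eqISE //= => _ _ _; complex_ring.
Qed.

End ProductGrade.

Lemma Bmul_cur_assoc la : star g1 g2 la ->
  msign (bnorm al) = 1 -> msign (bnorm (band d1 al)) = 1 ->
  msign (bnorm (band d2 al)) = 1 ->
  Bmul g1 g2 la g2 g1 (grade0 l r)
  = msign (bnorm (band (bperp d1) al) + bnorm (band (band d1 al) c2))
    * (Bmul (shift al g1) g2 (shift al la) g2 (shift al g1) (grade0 l r)
       * Bmul la (shift al g1) (shift al la) gA g2 g1).
Proof.
move=> st eA e1 e2.
(* Only after multiplying by these signs, all equal to 1, does the identity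
   hold coordinate by coordinate. *)
transitivity (msign (bnorm al) * msign (bnorm (band d1 al))
   * msign (bnorm (band d2 al)) * Bmul g1 g2 la g2 g1 (grade0 l r)).
  by rewrite eA e1 e2 !mul1r.
rewrite !msign_bnorm msignD !msign_bnorm !BmulE !lrprodM; apply: eq_lrprod => i.
move: (forallP st i) (band_eq0P hdc1 i) (band_eq0P hdc2 i); rewrite !ffunE.
by case: (al i); case: (d1 i); case: (c1 i); case: (d2 i); case: (c2 i); case: (la i);
  rewrite /= ?eqISE //= => _ _ _; complex_ring.
Qed.

End Coefficients.

Section FramedAlgebra.
Variables (l r : nat) (V : vectType CC) (pr : grade l r -> 'End(V))
          (mul : V -> V -> V) (one : V).
Hypothesis HS : is_framed_algebra pr mul one.
Local Notation mc := (mulcomp pr mul).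

Lemma prK la v : pr la (pr la v) = pr la v.
Proof. by case: HS => -[[prK _ _] _] _ _ _ _; exact: prK. Qed.

Lemma pr_ne la mu v : la != mu -> pr la (pr mu v) = 0.
Proof. by case: HS => -[[_ pr_ne _] _] _ _ _ _; exact: pr_ne. Qed.

Lemma pr_sum v : \sum_la pr la v = v.
Proof. by case: HS => -[[_ _ pr_sum] _] _ _ _ _; exact: pr_sum. Qed.

Lemma mulv_linear a : linear (mul a).
Proof. by case: HS => -[_ [_ linr]] _ _ _ _; exact: linr. Qed.

Lemma mul_linear_l b : linear (mul^~ b).
Proof. by case: HS => -[_ [linl _]] _ _ _ _; exact: linl. Qed.

Lemma mulv0 a : mul a 0 = 0.
Proof. by case: (linear_morph (mulv_linear a)). Qed.

Lemma mul0v b : mul 0 b = 0.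
Proof. by case: (linear_morph (mul_linear_l b)). Qed.

Lemma mulvDr a : {morph mul a : u v / u + v}.
Proof. by case: (linear_morph (mulv_linear a)). Qed.

Lemma mulvDl b : {morph mul^~ b : u v / u + v}.
Proof. by case: (linear_morph (mul_linear_l b)). Qed.

Lemma mulvZ a k v : mul a (k *: v) = k *: mul a v.
Proof. by case: (linear_morph (mulv_linear a)) => _ _ ->. Qed.

Lemma mulv_sumr a (I : finType) (F : I -> V) : mul a (\sum_i F i) = \sum_i mul a (F i).
Proof. exact: (big_morph _ (mulvDr a) (mulv0 a)). Qed.

Lemma mulv_suml b (I : finType) (F : I -> V) : mul (\sum_i F i) b = \sum_i mul (F i) b.
Proof. exact: (big_morph _ (mulvDl b) (mul0v b)). Qed.

Lemma mulv1 v : mul v one = v.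
Proof. by case: HS => _ _ [_ _ _ /(_ v) []]. Qed.

Lemma one_homog : homog pr (grade0 l r) one.
Proof. by case: HS => _ _ []. Qed.

Lemma homog0_scalar v : homog pr (grade0 l r) v -> exists k : CC, v = k *: one.
Proof. by case: HS => _ _ [_ _ scal _] _ _; exact: scal. Qed.

Lemma mulcomp_nonfusion la1 la2 x y la : homog pr la1 x -> homog pr la2 y ->
  ~~ star la1 la2 la -> mc la x y = 0.
Proof. by case: HS => _ _ _ FA3 _ hx hy; exact: (FA3 _ _ _ _ hx hy la). Qed.

Lemma mulcomp_braid la0 la1 la2 la3 a1 a2 a3 :
  homog pr la1 a1 -> homog pr la2 a2 -> homog pr la3 a3 ->
  forall la', la' \in Aset la0 la2 la1 la3 ->
  mc la0 a2 (mc la' a1 a3)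
  = \sum_(la in Aset la0 la1 la2 la3)
      Bmul la la' la0 la1 la2 la3 *: mc la0 a1 (mc la a2 a3).
Proof. by case: HS => _ _ _ _ FA4; exact: FA4. Qed.

Lemma homog_mulcomp la x y : homog pr la (mc la x y).
Proof. exact: prK. Qed.

Lemma homog_pr_ne la mu v : homog pr la v -> mu != la -> pr mu v = 0.
Proof. by rewrite /homog => <- /pr_ne. Qed.

Lemma mulcomp0l la y : mc la 0 y = 0.
Proof. by rewrite /mulcomp mul0v linear0. Qed.

Lemma mulcomp0r la x : mc la x 0 = 0.
Proof. by rewrite /mulcomp mulv0 linear0. Qed.

Definition mul0E := (mul0v, mulv0, mulcomp0l, mulcomp0r).

Lemma mulcompZr la x k y : mc la x (k *: y) = k *: mc la x y.
Proof. by rewrite /mulcomp mulvZ linearZ. Qed.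

Lemma mul_mulcomp nu x y :
  (forall la, la != nu -> mc la x y = 0) -> mul x y = mc nu x y.
Proof. by move=> mc0; rewrite -[LHS]pr_sum (bigD1 nu) //= big1 ?addr0. Qed.

Lemma mulcomp_braid1 la0 la1 la2 la3 a1 a2 a3 la la' :
  homog pr la1 a1 -> homog pr la2 a2 -> homog pr la3 a3 ->
  la' \in Aset la0 la2 la1 la3 -> Aset la0 la1 la2 la3 = [set la] ->
  mc la0 a2 (mc la' a1 a3) = Bmul la la' la0 la1 la2 la3 *: mc la0 a1 (mc la a2 a3).
Proof. by move=> h1 h2 h3 inA A1; rewrite (mulcomp_braid h1 h2 h3 inA) A1 big_set1. Qed.

(* Braided associativity with [one] as third factor. *)
Lemma mulcomp_comm gx gy x y nu : homog pr gx x -> homog pr gy y -> star gx gy nu ->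
  mc nu x y = Bmul gx gy nu gy gx (grade0 l r) *: mc nu y x.
Proof.
move=> hx hy st; have mc1 z G : mc G z one = pr G z by rewrite /mulcomp mulv1.
rewrite -{1}[y]hy -{2}[x]hx -!mc1; apply: (mulcomp_braid1 hy hx one_homog).
  by rewrite Aset_grade0 ?set11 // star_sym.
exact: Aset_grade0.
Qed.

End FramedAlgebra.

Section CurrentAction.
Variables (l r : nat) (V : vectType CC) (pr : grade l r -> 'End(V))
          (mul : V -> V -> V) (one : V).
Hypothesis HS : is_framed_algebra pr mul one.
Variables (al : bits l r) (a : V).
Local Notation gA := (grade_of (bzero l r) al).
Hypothesis Ha : homog pr gA a.
Local Notation mc := (mulcomp pr mul).

Lemma cur_mulE x G : homog pr G x -> mul a x = mc (shift al G) a x.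
Proof.
move=> hx; apply: (mul_mulcomp HS) => la ne.
by apply: (mulcomp_nonfusion HS Ha hx); rewrite star_cur_l.
Qed.

Lemma mul_curE x G : homog pr G x -> mul x a = mc (shift al G) x a.
Proof.
move=> hx; apply: (mul_mulcomp HS) => la ne.
by apply: (mulcomp_nonfusion HS hx Ha); rewrite star_cur_r.
Qed.

Lemma cur_annihilator_ideal :
  exists2 N : {vspace V}, is_ideal pr mul N
    & forall v, (v \in N) = [forall mu, mul a (pr mu v) == 0].
Proof.
have lin mu : linear (fun v => mul a (pr mu v)).
  by move=> k u v; rewrite linearP (mulvDr HS) (mulvZ HS).
have [N inN] := joint_kernel lin; exists N => //.
split=> [la m | s m]; rewrite !inN => /forallP m0; apply/forallP => mu.
  have [->|ne] := eqVneq mu la; first by rewrite (prK HS) m0.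
  by rewrite (pr_ne HS) // (mulv0 HS).
rewrite -(pr_sum HS s) (mulv_suml HS) linear_sum (mulv_sumr HS).
apply/eqP/big1 => nu _.
rewrite -(pr_sum HS m) (mulv_sumr HS) linear_sum (mulv_sumr HS).
apply/big1 => rho _; change (mul a (mc mu (pr nu s) (pr rho m)) = 0).
have [hs hm] := (prK HS nu s, prK HS rho m).
have [st|nst] := boolP (star nu rho mu); last first.
  by rewrite (mulcomp_nonfusion HS hs hm nst) (mulv0 HS).
(* (FA4) moves [a] past [pr nu s] onto [pr rho m], which [a] annihilates. *)
rewrite (cur_mulE (homog_mulcomp HS mu _ _)) (mulcomp_braid HS hs Ha hm); last first.
  by rewrite in_Aset st star_cur_l eqxx.
apply: big1 => la _.
by rewrite /mulcomp (eqP (m0 rho)) linear0 (mulv0 HS) linear0 scaler0.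
Qed.

Hypothesis Hsimple : is_simple pr mul.
Hypothesis anz : a != 0.

(* If [a a = 0], the ideal above contains [a] but not [1]. *)
Lemma cur_mul_self_neq0 : mul a a != 0.
Proof.
apply/eqP => aa0; have [N N_ideal inN] := cur_annihilator_ideal.
have aN : a \in N.
  rewrite inN; apply/forallP => mu; have [->|ne] := eqVneq mu gA.
    by rewrite Ha aa0.
  by rewrite (homog_pr_ne HS Ha ne) (mulv0 HS).
case: (Hsimple N_ideal) => N_eq.
  by move: aN; rewrite N_eq memv0 (negbTE anz).
have := memvf one; rewrite -N_eq inN => /forallP /(_ (grade0 l r)).
by rewrite (one_homog HS) (mulv1 HS) (negbTE anz).
Qed.

Lemma cur_weight_even : msign (bnorm al) = 1.
Proof.
have aa : mc (grade0 l r) a a != 0.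
  by rewrite -(shift_cur al) -(cur_mulE Ha) cur_mul_self_neq0.
apply: (scale_fixed aa); rewrite -Bmul_cur_self -(mulcomp_comm HS Ha Ha) //.
by rewrite star_cur_l shift_cur.
Qed.

(* [a a] is a nonzero multiple of [1], and (FA4) writes [x (a a)] through [x a]. *)
Lemma mul_cur_eq0 x G : homog pr G x -> mul x a = 0 -> x = 0.
Proof.
move=> hx xa0.
have [k aaE] := homog0_scalar HS (homog_mulcomp HS (grade0 l r) a a).
have k0 : k != 0.
  apply: contraNneq cur_mul_self_neq0 => k0.
  by rewrite (cur_mulE Ha) shift_cur aaE k0 scale0r.
suff: k *: x = 0 by move/eqP; rewrite scaler_eq0 (negbTE k0) => /eqP.
have -> : k *: x = mc G x (mc (grade0 l r) a a).
  by rewrite aaE (mulcompZr HS) /mulcomp (mulv1 HS) hx.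
rewrite (mulcomp_braid HS Ha hx Ha) ?big1 // => [la _|].
  by rewrite /mulcomp xa0 linear0 (mulv0 HS) linear0 scaler0.
by rewrite in_Aset star_cur_l shift_cur eqxx star0r eqxx.
Qed.

Lemma cur_weight_even_on d c x : band d c = bzero l r ->
  homog pr (grade_of d c) x -> x != 0 -> msign (bnorm (band d al)) = 1.
Proof.
move=> hdc hx xnz; set G := grade_of d c in hx *.
have stl : star gA G (shift al G) by rewrite star_cur_l eqxx.
have str : star G gA (shift al G) by rewrite star_cur_r eqxx.
have xa : mc (shift al G) x a != 0.
  by rewrite -(mul_curE hx); exact: contra_neq (mul_cur_eq0 hx) xnz.
apply: (scale_fixed xa); rewrite -(Bmul_cur_braid al hdc) -scalerA.
by rewrite -(mulcomp_comm HS Ha hx stl) -(mulcomp_comm HS hx Ha str).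
Qed.

Variables (d1 c1 d2 c2 : bits l r) (v1 v2 : V).
Hypotheses (hdc1 : band d1 c1 = bzero l r) (hdc2 : band d2 c2 = bzero l r).
Local Notation g1 := (grade_of d1 c1).
Local Notation g2 := (grade_of d2 c2).
Hypotheses (Hv1 : homog pr g1 v1) (Hv2 : homog pr g2 v2).

Lemma cur_mul_mulcomp g : in_Z2d (band d1 d2) g -> msign (bnorm (band d1 al)) = 1 ->
  mul a (mc (grade_of (bxor d1 d2) (bxor (band (bperp (bxor d1 d2)) (bxor c1 c2)) g))
            v1 v2)
  = (msign_half (bnorm (band d1 al))
     * msign (bnorm (band al c1) + bnorm (band (band d1 d2) al)
              + bnorm (band g al) + bnorm (band (band d1 al) c2)))
    *: mc (grade_of (bxor d1 d2)
                    (bxor (band (bperp (bxor d1 d2)) (bxor (bxor c1 c2) al)) g))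
          v1 (mul a v2).
Proof.
move=> hg e1; have shiftP := shift_prod_grade al hdc1 hdc2 hg.
rewrite (cur_mulE (homog_mulcomp HS _ _ _)) (cur_mulE Hv2) shiftP.
rewrite (mulcomp_braid1 HS Hv1 Ha Hv2 _ (Aset_cur2 _)).
- by rewrite (Bmul_cur_prod (al := al) hdc1 hdc2 hg e1).
- by rewrite in_Aset star_prod_grade // star_cur_l shiftP eqxx.
by rewrite -shiftP star_sym star_shiftl star_sym star_prod_grade.
Qed.

Hypotheses (eA : msign (bnorm al) = 1) (e1 : msign (bnorm (band d1 al)) = 1)
           (e2 : msign (bnorm (band d2 al)) = 1).

Lemma cur_mul_mulcomp_comm la : star g1 g2 la ->
  mul a (mc la v1 v2)
  = msign (bnorm (band (bperp d1) al) + bnorm (band (band d1 al) c2))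
    *: mc (shift al la) (mul a v1) v2.
Proof.
move=> st; have hw : homog pr (shift al g1) (mul a v1).
  by rewrite (cur_mulE Hv1); exact: (homog_mulcomp HS).
have st' : star (shift al g1) g2 (shift al la) by rewrite star_shiftl.
rewrite (cur_mulE (homog_mulcomp HS _ _ _)) (mulcomp_comm HS Hv1 Hv2 st) (mulcompZr HS).
rewrite (mulcomp_comm HS hw Hv2 st') (cur_mulE Hv1).
rewrite (mulcomp_braid1 HS Ha Hv2 Hv1 (la := la)).
- by rewrite (Bmul_cur_assoc hdc1 hdc2 st eA e1 e2) -!scalerA.
- by rewrite Aset_cur2 ?set11 // star_sym.
by rewrite Aset_cur1 shiftK // star_sym.
Qed.

Lemma cur_mul_mul : mul a (mul v1 v2)
  = msign (bnorm (band (bperp d1) al) + bnorm (band (band d1 al) c2))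
    *: mul (mul a v1) v2.
Proof.
have hw : homog pr (shift al g1) (mul a v1).
  by rewrite (cur_mulE Hv1); exact: (homog_mulcomp HS).
rewrite -[mul v1 v2](pr_sum HS) (mulv_sumr HS) -[mul (mul a v1) v2](pr_sum HS).
rewrite scaler_sumr [RHS](reindex_inj (inv_inj (shiftK al))) /=.
apply: eq_bigr => la _; have [st|nst] := boolP (star g1 g2 la).
  exact: cur_mul_mulcomp_comm.
rewrite [pr la _](mulcomp_nonfusion HS Hv1 Hv2 nst) (mulv0 HS).
by rewrite [pr _ _](mulcomp_nonfusion HS hw Hv2) ?scaler0 // star_shiftl.
Qed.

End CurrentAction.

Theorem mainTheorem11 (l r : nat) (V : vectType CC) (pr : grade l r -> 'End(V))
  (mul : V -> V -> V) (one : V)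
  (HS : is_framed_algebra pr mul one) (Hsimple : is_simple pr mul)
  (al d1 c1 d2 c2 : bits l r)
  (Hal : in_CS pr al) (H1 : in_IS pr d1 c1) (H2 : in_IS pr d2 c2)
  (a v1 v2 : V)
  (Ha : homog pr (grade_of (bzero l r) al) a)
  (Hv1 : homog pr (grade_of d1 c1) v1)
  (Hv2 : homog pr (grade_of d2 c2) v2) :
  (forall g : bits l r, in_Z2d (band d1 d2) g ->
     let d := bxor d1 d2 in
     mul a (mulcomp pr mul (grade_of d (bxor (band (bperp d) (bxor c1 c2)) g)) v1 v2)
     = (msign_half (bnorm (band d1 al))
        * msign (bnorm (band al c1) + bnorm (band (band d1 d2) al)
                 + bnorm (band g al) + bnorm (band (band d1 al) c2)))
       *: mulcomp pr mul (grade_of d (bxor (band (bperp d) (bxor (bxor c1 c2) al)) g))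
                  v1 (mul a v2))
  /\
  mul a (mul v1 v2)
  = msign (bnorm (band (bperp d1) al) + bnorm (band (band d1 al) c2))
    *: mul (mul a v1) v2.
Proof.
case: H1 H2 => [hdc1 _] [hdc2 _].
have [->|anz] := eqVneq a 0; first by split=> [g _ /=|]; rewrite !(mul0E HS) scaler0.
have [->|v1nz] := eqVneq v1 0; first by split=> [g _ /=|]; rewrite !(mul0E HS) scaler0.
have [->|v2nz] := eqVneq v2 0; first by split=> [g _ /=|]; rewrite !(mul0E HS) scaler0.
have eA := cur_weight_even HS Ha Hsimple anz.
have e1 := cur_weight_even_on HS Ha Hsimple anz hdc1 Hv1 v1nz.
have e2 := cur_weight_even_on HS Ha Hsimple anz hdc2 Hv2 v2nz.
split=> [g hg /=|]; first exact: (cur_mul_mulcomp HS Ha hdc1 hdc2 Hv1 Hv2 hg e1).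
exact: (cur_mul_mul HS Ha hdc1 hdc2 Hv1 Hv2 eA e1 e2).
Qed.
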